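(* If a non-failed Boolean CSP is limited and hyper-arc consistent, then it is closed under the applications of (each of) the rules of the proof system BOOL'.
   Context: A Boolean CSP is $\langle \mathcal C; x_1\in D_1,\dots,x_n\in D_n\rangle$ with $D_i\subseteq\{0,1\}$ and $\mathcal C$ a finite set of Boolean constraints, each of the forms $u=v$ ($\{(0,0),(1,1)\}$), $\neg u=v$ ($\{(0,1),(1,0)\}$), $u\wedge v=w$ ($\{(0,0,0),(0,1,0),(1,0,0),(1,1,1)\}$), $u\vee v=w$ ($\{(0,0,0),(0,1,1),(1,0,1),(1,1,1)\}$) on distinct variables; constraints are always understood as restricted to the current domains. $x=d$ means $x\in\{d\}$. A CSP is failed if some domain is empty. A constraint is solved if it equals the product of the domains of its variables; $\phi$ is a reformulation of $\psi$ if removing solved constraints from both yields the same CSP. A Boolean CSP is limited if it contains no constraint $x\wedge y=z$ whose variables have domains $x=1, y\in\{0,1\}, z\in\{0,1\}$ or $x\in\{0,1\}, y=1, z\in\{0,1\}$, and no constraint $x\vee y=z$ whose variables have domains $x=0, y\in\{0,1\}, z\in\{0,1\}$ or $x\in\{0,1\}, y=0, z\in\{0,1\}$. The proof system BOOL' consists of the rules (constraint, premise $\rightarrow$ conclusion; $x,y,z$ schematic): EQU1: $x=y$, $x=1\rightarrow y=1$; EQU2: $x=y$, $y=1\rightarrow x=1$; EQU3: $x=y$, $x=0\rightarrow y=0$; EQU4: $x=y$, $y=0\rightarrow x=0$; NOT1: $\neg x=y$, $x=1\rightarrow y=0$; NOT2: $\neg x=y$, $x=0\rightarrow y=1$; NOT3: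 $\neg x=y$, $y=1\rightarrow x=0$; NOT4: $\neg x=y$, $y=0\rightarrow x=1$; AND1': $x\wedge y=z$, $x=1\rightarrow$ constraint $y=z$; AND2': $x\wedge y=z$, $y=1\rightarrow$ constraint $x=z$; AND3': $x\wedge y=z$, $z=1\rightarrow x=1$; AND4: $x\wedge y=z$, $x=0\rightarrow z=0$; AND5: $x\wedge y=z$, $y=0\rightarrow z=0$; AND6': $x\wedge y=z$, $z=1\rightarrow y=1$; OR1: $x\vee y=z$, $x=1\rightarrow z=1$; OR2': $x\vee y=z$, $x=0\rightarrow$ constraint $y=z$; OR3': $x\vee y=z$, $y=0\rightarrow$ constraint $x=z$; OR4': $x\vee y=z$, $z=0\rightarrow x=0$; OR5: $x\vee y=z$, $y=1\rightarrow z=1$; OR6': $x\vee y=z$, $z=0\rightarrow y=0$. On CSPs: a rule with constraint $c$ and premise $X=s$ is applicable to a CSP containing (an instance of) $c$ in which each variable of $X$ has domain exactly $\{s_i\}$. If the conclusion is $Y=t$, the result removes $c$ and replaces the domain $D$ of each $y_j\in Y$ by $D\cap\{t_j\}$; if the conclusion is a constraint, the result replaces $c$ by that equality constraint (on the corresponding variables) and leaves domains unchanged. An application is relevant if its result is not a reformulation of the original CSP. A CSP is closed under the applications of a rule $R$ if $R$ cannot be applied or no application of it is relevant. A constraint is hyper-arc consistent if for every variable of it each value in its domain participates in a solution to the constraint (restricted to current domains); a CSP is hyper-arc consistent if every constraint of it is. *)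

From HB Require Import structures.
From mathcomp Require Import all_boot.
Set Implicit Arguments. Unset Strict Implicit. Unset Printing Implicit Defensive.

Section BoolCSP.
Variable n : nat.
(* Variables are x_1..x_n, represented by 'I_n; the value 0 is false, 1 is true. *)
Notation var := 'I_n.

(* Constraint forms: u = v, ~u = v, u /\ v = w, u \/ v = w. *)
Inductive constr :=
| CEq of var & var
| CNot of var & var
| CAnd of var & var & var
| COr of var & var & var.

Definition constr_enc (c : constr) :
  ((var * var) + (var * var)) + ((var * var * var) + (var * var * var)) :=
  match c with
  | CEq x y => inl (inl (x, y))
  | CNot x y => inl (inr (x, y))
  | CAnd x y z => inr (inl (x, y, z))
  | COr x y z => inr (inr (x, y, z))
  end.
Definition constr_dec (e : ((var * var) + (var * var)) + ((var * var * var) + (var * var * var))) : constr :=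
  match e with
  | inl (inl (x, y)) => CEq x y
  | inl (inr (x, y)) => CNot x y
  | inr (inl (x, y, z)) => CAnd x y z
  | inr (inr (x, y, z)) => COr x y z
  end.
Lemma constr_encK : cancel constr_enc constr_dec. Proof. by case. Qed.
HB.instance Definition _ := Finite.copy constr (can_type constr_encK).

Definition cvars (c : constr) : seq var :=
  match c with
  | CEq x y | CNot x y => [:: x; y]
  | CAnd x y z | COr x y z => [:: x; y; z]
  end.

Definition wf_constr (c : constr) : bool := uniq (cvars c).

Definition sat (c : constr) (a : {ffun var -> bool}) : bool :=
  match c with
  | CEq x y => a y == a x
  | CNot x y => a y == ~~ a x
  | CAnd x y z => a z == (a x && a y)
  | COr x y z => a z == (a x || a y)
  end.

(* A CSP < C ; x_1 \in D_1, ..., x_n \in D_n >, D_i \subseteq {0,1}. *)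
Record csp := CSP { dom : var -> {set bool}; cstr : {set constr} }.

Definition wf_csp (phi : csp) : Prop := forall c, c \in cstr phi -> wf_constr c.

Definition failed (phi : csp) : Prop := exists i, dom phi i = set0.

Definition in_doms (D : var -> {set bool}) (c : constr) (a : {ffun var -> bool}) : bool :=
  all (fun u => a u \in D u) (cvars c).

(* c is solved: its relation restricted to the domains is the product of the
   domains of its variables *)
Definition solved (D : var -> {set bool}) (c : constr) : bool :=
  [forall a : {ffun var -> bool}, in_doms D c a ==> sat c a].

Definition unsolved (phi : csp) : {set constr} :=
  [set c in cstr phi | ~~ solved (dom phi) c].

Definition reformulation (psi phi : csp) : Prop :=
  (forall i, dom psi i = dom phi i) /\ unsolved psi = unsolved phi.

Definition hac_constr (D : var -> {set bool}) (c : constr) : Prop :=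
  forall v, v \in cvars c -> forall d, d \in D v ->
    exists a : {ffun var -> bool}, [/\ a v = d, in_doms D c a & sat c a].
Definition hac (phi : csp) : Prop :=
  forall c, c \in cstr phi -> hac_constr (dom phi) c.

Definition limited (phi : csp) : Prop :=
  forall c, c \in cstr phi ->
  match c with
  | CAnd x y z =>
      ~ (dom phi x = [set true] /\ dom phi y = setT /\ dom phi z = setT) /\
      ~ (dom phi x = setT /\ dom phi y = [set true] /\ dom phi z = setT)
  | COr x y z =>
      ~ (dom phi x = [set false] /\ dom phi y = setT /\ dom phi z = setT) /\
      ~ (dom phi x = setT /\ dom phi y = [set false] /\ dom phi z = setT)
  | _ => True
  end.

Inductive rule :=
| EQU1 | EQU2 | EQU3 | EQU4
| NOT1 | NOT2 | NOT3 | NOT4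
| AND1' | AND2' | AND3' | AND4 | AND5 | AND6'
| OR1 | OR2' | OR3' | OR4' | OR5 | OR6'.

(* result of a rule whose conclusion is  y = t : remove c, D_y := D_y \cap {t} *)
Definition concl_dom (phi : csp) (c : constr) (y : var) (t : bool) : csp :=
  CSP (fun i => if i == y then dom phi i :&: [set t] else dom phi i)
      (cstr phi :\ c).

(* result of a rule whose conclusion is a constraint c' : replace c by c' *)
Definition concl_cstr (phi : csp) (c c' : constr) : csp :=
  CSP (dom phi) ((cstr phi :\ c) :|: [set c']).

(* premise x = s : the domain of x is exactly {s} *)
Definition prem (phi : csp) (x : var) (s : bool) : bool := dom phi x == [set s].

(* app r phi c = Some psi  iff  r (with its schematic variables instantiated by
   the variables of c, in order) has its premise satisfied in phi and psi is the
   result; the requirement that c belongs to phi is in [applies] below *)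
Definition app (r : rule) (phi : csp) (c : constr) : option csp :=
  match r, c with
  | EQU1, CEq x y => if prem phi x true then Some (concl_dom phi c y true) else None
  | EQU2, CEq x y => if prem phi y true then Some (concl_dom phi c x true) else None
  | EQU3, CEq x y => if prem phi x false then Some (concl_dom phi c y false) else None
  | EQU4, CEq x y => if prem phi y false then Some (concl_dom phi c x false) else None
  | NOT1, CNot x y => if prem phi x true then Some (concl_dom phi c y false) else None
  | NOT2, CNot x y => if prem phi x false then Some (concl_dom phi c y true) else None
  | NOT3, CNot x y => if prem phi y true then Some (concl_dom phi c x false) else None
  | NOT4, CNot x y => if prem phi y false then Some (concl_dom phi c x true) else None
  | AND1', CAnd x y z => if prem phi x true then Some (concl_cstr phi c (CEq y z)) else None
  | AND2', CAnd x y z => if prem phi y true then Some (concl_cstr phi c (CEq x z)) else None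
  | AND3', CAnd x y z => if prem phi z true then Some (concl_dom phi c x true) else None
  | AND4, CAnd x y z => if prem phi x false then Some (concl_dom phi c z false) else None
  | AND5, CAnd x y z => if prem phi y false then Some (concl_dom phi c z false) else None
  | AND6', CAnd x y z => if prem phi z true then Some (concl_dom phi c y true) else None
  | OR1, COr x y z => if prem phi x true then Some (concl_dom phi c z true) else None
  | OR2', COr x y z => if prem phi x false then Some (concl_cstr phi c (CEq y z)) else None
  | OR3', COr x y z => if prem phi y false then Some (concl_cstr phi c (CEq x z)) else None
  | OR4', COr x y z => if prem phi z false then Some (concl_dom phi c x false) else None
  | OR5, COr x y z => if prem phi y true then Some (concl_dom phi c z true) else None
  | OR6', COr x y z => if prem phi z false then Some (concl_dom phi c y false) else None
  | _, _ => None
  end.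

Definition applies (r : rule) (phi : csp) (c : constr) (psi : csp) : Prop :=
  c \in cstr phi /\ app r phi c = Some psi.

Definition relevant (phi psi : csp) : Prop := ~ reformulation psi phi.

Definition closed_under (r : rule) (phi : csp) : Prop :=
  forall c psi, applies r phi c psi -> ~ relevant phi psi.

End BoolCSP.

From mathcomp Require Import all_boot.
Set Implicit Arguments. Unset Strict Implicit. Unset Printing Implicit Defensive.

(* A rule of BOOL' reads and rewrites a single constraint c, and hyper-arc
   consistency is a property of each constraint on its own.  Once the premise
   of a rule holds, the supports of the remaining values already satisfy the
   conclusion, and c is solved; for AND1', AND2', OR2' and OR3' the new
   equality is solved too, because limitedness excludes the only configuration
   (both of its variables ranging over {0,1}) where it would not be.  So every
   application yields a reformulation.  As the domains are subsets of {0,1},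
   these local facts are finite checks on the membership bits of the two or
   three domains of c. *)

Lemma forall_in_boolE (A : {set bool}) (P : pred bool) :
  [forall b in A, P b] = ((true \in A) ==> P true) && ((false \in A) ==> P false).
Proof.
apply/forall_inP/andP => [H|[Ht Hf] [] ?].
- by split; apply/implyP => /H.
- exact: (implyP Ht).
- exact: (implyP Hf).
Qed.

Lemma exists_in_boolE (A : {set bool}) (P : pred bool) :
  [exists b in A, P b] = (true \in A) && P true || (false \in A) && P false.
Proof.
apply/exists_inP/orP => [[[] -> ->]|[/andP[? ?]|/andP[? ?]]].
- by left.
- by right.
- by exists true.
- by exists false.
Qed.

Lemma eq_set1_bool (S : {set bool}) b : (S == [set b]) = (b \in S) && (~~ b \notin S).
Proof.
apply/eqP/andP => [->|[Sb Snb]]; first by rewrite !inE eqxx; case: b.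
by apply/setP => c; rewrite inE; case: c b Sb Snb => -[] // _ /negbTE.
Qed.

Lemma eq_setT_bool (S : {set bool}) : (S == setT) = (true \in S) && (false \in S).
Proof.
apply/eqP/andP => [->|[St Sf]]; first by rewrite !inE.
by apply/setP => -[]; rewrite inE.
Qed.

Lemma sub_set1_bool (S : {set bool}) b : (S \subset [set b]) = (~~ b \notin S).
Proof.
apply/subsetP/idP => [sub|Snb c Sc]; first by apply/negP => /sub; rewrite inE; case: (b).
by rewrite inE; apply/eqP; case: c b Snb Sc => -[] //= /negbTE ->.
Qed.

Section LocalDomains.
Implicit Types (Dx Dy Dz : {set bool}) (g : bool -> bool) (f : bool -> bool -> bool).

Definition hac2 g Dx Dy :=
  [forall u in Dx, exists v in Dy, v == g u] && [forall v in Dy, exists u in Dx, v == g u].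

Definition solved2 g Dx Dy := [forall u in Dx, forall v in Dy, v == g u].

Definition hac3 f Dx Dy Dz :=
  [&& [forall u in Dx, exists v in Dy, exists w in Dz, w == f u v],
      [forall v in Dy, exists u in Dx, exists w in Dz, w == f u v] &
      [forall w in Dz, exists u in Dx, exists v in Dy, w == f u v]].

Definition solved3 f Dx Dy Dz := [forall u in Dx, forall v in Dy, forall w in Dz, w == f u v].

Ltac decide_bool_domains :=
  rewrite /hac2 /solved2 /hac3 /solved3 !forall_in_boolE !exists_in_boolE
          ?eq_set1_bool ?eq_setT_bool ?sub_set1_bool /=;
  repeat match goal with |- context [?b \in ?S] => case: (b \in S) end.

Lemma equ_rules Dx Dy t : hac2 id Dx Dy ->
  (Dx == [set t] -> (Dy \subset [set t]) && solved2 id Dx Dy) /\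
  (Dy == [set t] -> (Dx \subset [set t]) && solved2 id Dx Dy).
Proof. by case: t; decide_bool_domains. Qed.

Lemma not_rules Dx Dy t : hac2 negb Dx Dy ->
  (Dx == [set t] -> (Dy \subset [set ~~ t]) && solved2 negb Dx Dy) /\
  (Dy == [set t] -> (Dx \subset [set ~~ t]) && solved2 negb Dx Dy).
Proof. by case: t; decide_bool_domains. Qed.

Lemma and_rules Dx Dy Dz : hac3 andb Dx Dy Dz ->
  ~~ [&& Dx == [set true], Dy == setT & Dz == setT] ->
  ~~ [&& Dx == setT, Dy == [set true] & Dz == setT] ->
  [/\ Dx == [set true] -> solved3 andb Dx Dy Dz && solved2 id Dy Dz,
      Dy == [set true] -> solved3 andb Dx Dy Dz && solved2 id Dx Dz,
      Dz == [set true] ->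
        [&& solved3 andb Dx Dy Dz, Dx \subset [set true] & Dy \subset [set true]],
      Dx == [set false] -> solved3 andb Dx Dy Dz && (Dz \subset [set false]) &
      Dy == [set false] -> solved3 andb Dx Dy Dz && (Dz \subset [set false])].
Proof. by decide_bool_domains. Qed.

Lemma or_rules Dx Dy Dz : hac3 orb Dx Dy Dz ->
  ~~ [&& Dx == [set false], Dy == setT & Dz == setT] ->
  ~~ [&& Dx == setT, Dy == [set false] & Dz == setT] ->
  [/\ Dx == [set false] -> solved3 orb Dx Dy Dz && solved2 id Dy Dz,
      Dy == [set false] -> solved3 orb Dx Dy Dz && solved2 id Dx Dz,
      Dz == [set false] ->
        [&& solved3 orb Dx Dy Dz, Dx \subset [set false] & Dy \subset [set false]],
      Dx == [set true] -> solved3 orb Dx Dy Dz && (Dz \subset [set true]) &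
      Dy == [set true] -> solved3 orb Dx Dy Dz && (Dz \subset [set true])].
Proof. by decide_bool_domains. Qed.

End LocalDomains.

Section Bridge.
Variable n : nat.
Implicit Types (D : 'I_n -> {set bool}) (c : constr n) (a : {ffun 'I_n -> bool}).

Lemma in_domsP D c a : reflect {in cvars c, forall u, a u \in D u} (in_doms D c a).
Proof. exact: allP. Qed.

Lemma hac2_of D c g x y :
  (forall a, sat c a = (a y == g (a x))) -> cvars c = [:: x; y] ->
  hac_constr D c -> hac2 g (D x) (D y).
Proof.
move=> satE cvE hacc.
have [cx cy] : x \in cvars c /\ y \in cvars c by rewrite cvE !inE !eqxx ?orbT.
apply/andP; split; apply/forall_inP => d Dd.
- have [a [<- /in_domsP Da]] := hacc x cx d Dd.
  by rewrite satE => sat_a; apply/exists_inP; exists (a y); rewrite ?Da.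
- have [a [<- /in_domsP Da]] := hacc y cy d Dd.
  by rewrite satE => sat_a; apply/exists_inP; exists (a x); rewrite ?Da.
Qed.

Lemma hac3_of D c f x y z :
  (forall a, sat c a = (a z == f (a x) (a y))) -> cvars c = [:: x; y; z] ->
  hac_constr D c -> hac3 f (D x) (D y) (D z).
Proof.
move=> satE cvE hacc.
have [cx cy cz] : [/\ x \in cvars c, y \in cvars c & z \in cvars c].
  by rewrite cvE !inE !eqxx ?orbT.
apply/and3P; split; apply/forall_inP => d Dd.
- have [a [<- /in_domsP Da]] := hacc x cx d Dd.
  rewrite satE => sat_a; apply/exists_inP; exists (a y); rewrite ?Da //.
  by apply/exists_inP; exists (a z); rewrite ?Da.
- have [a [<- /in_domsP Da]] := hacc y cy d Dd.
  rewrite satE => sat_a; apply/exists_inP; exists (a x); rewrite ?Da //.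
  by apply/exists_inP; exists (a z); rewrite ?Da.
- have [a [<- /in_domsP Da]] := hacc z cz d Dd.
  rewrite satE => sat_a; apply/exists_inP; exists (a x); rewrite ?Da //.
  by apply/exists_inP; exists (a y); rewrite ?Da.
Qed.

Lemma solved2_of D c g x y :
  (forall a, sat c a = (a y == g (a x))) -> cvars c = [:: x; y] ->
  solved2 g (D x) (D y) -> solved D c.
Proof.
move=> satE cvE sol; apply/forallP => a; apply/implyP.
rewrite /in_doms cvE /= andbT satE => /andP[Dax Day].
by move/forall_inP/(_ _ Dax)/forall_inP/(_ _ Day): sol.
Qed.

Lemma solved3_of D c f x y z :
  (forall a, sat c a = (a z == f (a x) (a y))) -> cvars c = [:: x; y; z] ->
  solved3 f (D x) (D y) (D z) -> solved D c.
Proof.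
move=> satE cvE sol; apply/forallP => a; apply/implyP.
rewrite /in_doms cvE /= andbT satE => /and3P[Dax Day Daz].
by move/forall_inP/(_ _ Dax)/forall_inP/(_ _ Day)/forall_inP/(_ _ Daz): sol.
Qed.

End Bridge.

Section Reformulation.
Variables (n : nat) (phi : csp n).

Lemma eq_solved (D D' : 'I_n -> {set bool}) c : D =1 D' -> solved D c = solved D' c.
Proof.
by move=> DD'; apply: eq_forallb => a; congr (_ ==> _); apply: eq_all => u; rewrite /= DD'.
Qed.

Lemma reformulation_concl_dom c y t :
  solved (dom phi) c -> dom phi y \subset [set t] -> reformulation (concl_dom phi c y t) phi.
Proof.
move=> sol_c /setIidPl Dy.
have domE : dom (concl_dom phi c y t) =1 dom phi by move=> i /=; case: eqP => // ->.
split=> //; apply/setP => d; rewrite !inE (eq_solved d domE).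
by have [->|] := eqVneq d c; rewrite ?sol_c ?andbF.
Qed.

Lemma reformulation_concl_cstr c c' :
  solved (dom phi) c -> solved (dom phi) c' -> reformulation (concl_cstr phi c c') phi.
Proof.
move=> sol_c sol_c'; split=> //; apply/setP => d; rewrite !inE /=.
have [->|_] := eqVneq d c'; first by rewrite sol_c' !andbF.
by have [->|] := eqVneq d c; rewrite ?sol_c ?andbF ?orbF.
Qed.

End Reformulation.

Lemma not_eq3 (T : eqType) (a1 a2 a3 b1 b2 b3 : T) :
  ~ (a1 = b1 /\ a2 = b2 /\ a3 = b3) -> ~~ [&& a1 == b1, a2 == b2 & a3 == b3].
Proof. by move=> neq; apply/and3P => -[/eqP ? /eqP ? /eqP ?]; apply: neq. Qed.

Section Closure.
Variables (n : nat) (phi : csp n).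
Hypotheses (hac_phi : hac phi) (lim_phi : limited phi).

Lemma closed_CEq x y r psi :
  CEq x y \in cstr phi -> app r phi (CEq x y) = Some psi -> reformulation psi phi.
Proof.
move=> cin; have hac_c := hac2_of (c := CEq x y) (g := id) (fun _ => erefl) erefl (hac_phi cin).
have solved_c := solved2_of (D := dom phi) (c := CEq x y) (g := id) (fun _ => erefl) erefl.
case: r => //=; case: ifP => // hp [<-].
- by case/andP: ((equ_rules _ hac_c).1 hp) => ? /solved_c ?; apply: reformulation_concl_dom.
- by case/andP: ((equ_rules _ hac_c).2 hp) => ? /solved_c ?; apply: reformulation_concl_dom.
- by case/andP: ((equ_rules _ hac_c).1 hp) => ? /solved_c ?; apply: reformulation_concl_dom.
- by case/andP: ((equ_rules _ hac_c).2 hp) => ? /solved_c ?; apply: reformulation_concl_dom.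
Qed.

Lemma closed_CNot x y r psi :
  CNot x y \in cstr phi -> app r phi (CNot x y) = Some psi -> reformulation psi phi.
Proof.
move=> cin; have hac_c := hac2_of (c := CNot x y) (g := negb) (fun _ => erefl) erefl (hac_phi cin).
have solved_c := solved2_of (D := dom phi) (c := CNot x y) (g := negb) (fun _ => erefl) erefl.
case: r => //=; case: ifP => // hp [<-].
- by case/andP: ((not_rules _ hac_c).1 hp) => ? /solved_c ?; apply: reformulation_concl_dom.
- by case/andP: ((not_rules _ hac_c).1 hp) => ? /solved_c ?; apply: reformulation_concl_dom.
- by case/andP: ((not_rules _ hac_c).2 hp) => ? /solved_c ?; apply: reformulation_concl_dom.
- by case/andP: ((not_rules _ hac_c).2 hp) => ? /solved_c ?; apply: reformulation_concl_dom.
Qed.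

Lemma closed_CAnd x y z r psi :
  CAnd x y z \in cstr phi -> app r phi (CAnd x y z) = Some psi -> reformulation psi phi.
Proof.
move=> cin; have hac_c := hac3_of (c := CAnd x y z) (f := andb) (fun _ => erefl) erefl (hac_phi cin).
have [lim_x lim_y] := lim_phi cin.
have [Rx Ry Rz Rx0 Ry0] := and_rules hac_c (not_eq3 lim_x) (not_eq3 lim_y).
have solved_c := solved3_of (D := dom phi) (c := CAnd x y z) (f := andb) (fun _ => erefl) erefl.
have solved_eq u v := solved2_of (D := dom phi) (c := CEq u v) (g := id) (fun _ => erefl) erefl.
case: r => //=; case: ifP => // hp [<-].
- by case/andP: (Rx hp) => /solved_c ? /solved_eq ?; apply: reformulation_concl_cstr.
- by case/andP: (Ry hp) => /solved_c ? /solved_eq ?; apply: reformulation_concl_cstr.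
- by case/and3P: (Rz hp) => /solved_c ? ? _; apply: reformulation_concl_dom.
- by case/andP: (Rx0 hp) => /solved_c ? ?; apply: reformulation_concl_dom.
- by case/andP: (Ry0 hp) => /solved_c ? ?; apply: reformulation_concl_dom.
- by case/and3P: (Rz hp) => /solved_c ? _ ?; apply: reformulation_concl_dom.
Qed.

Lemma closed_COr x y z r psi :
  COr x y z \in cstr phi -> app r phi (COr x y z) = Some psi -> reformulation psi phi.
Proof.
move=> cin; have hac_c := hac3_of (c := COr x y z) (f := orb) (fun _ => erefl) erefl (hac_phi cin).
have [lim_x lim_y] := lim_phi cin.
have [Rx Ry Rz Rx1 Ry1] := or_rules hac_c (not_eq3 lim_x) (not_eq3 lim_y).
have solved_c := solved3_of (D := dom phi) (c := COr x y z) (f := orb) (fun _ => erefl) erefl.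
have solved_eq u v := solved2_of (D := dom phi) (c := CEq u v) (g := id) (fun _ => erefl) erefl.
case: r => //=; case: ifP => // hp [<-].
- by case/andP: (Rx1 hp) => /solved_c ? ?; apply: reformulation_concl_dom.
- by case/andP: (Rx hp) => /solved_c ? /solved_eq ?; apply: reformulation_concl_cstr.
- by case/andP: (Ry hp) => /solved_c ? /solved_eq ?; apply: reformulation_concl_cstr.
- by case/and3P: (Rz hp) => /solved_c ? ? _; apply: reformulation_concl_dom.
- by case/andP: (Ry1 hp) => /solved_c ? ?; apply: reformulation_concl_dom.
- by case/and3P: (Rz hp) => /solved_c ? _ ?; apply: reformulation_concl_dom.
Qed.

End Closure.

Lemma closed_under_of_reformulation (n : nat) (phi : csp n) r :
  (forall c psi, c \in cstr phi -> app r phi c = Some psi -> reformulation psi phi) ->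
  closed_under r phi.
Proof. by move=> ref c psi [cin app_c]; apply; apply: ref app_c. Qed.

Theorem theorem6 (n : nat) (phi : csp n) :
  wf_csp phi -> ~ failed phi -> limited phi -> hac phi ->
  forall r : rule, closed_under r phi.
Proof.
move=> _ _ lim_phi hac_phi r; apply: closed_under_of_reformulation.
case=> [x y|x y|x y z|x y z] psi.
- exact: closed_CEq.
- exact: closed_CNot.
- exact: closed_CAnd.
- exact: closed_COr.
Qed.
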